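(* Let $\mathcal{N}>0$ be real, let $n\ge 0$ be an integer, and put $N=\mathcal{N}+\tfrac12-n$. Then the Cari\~{n}ena polynomial $\mathcal{H}_n^{\mathcal{N}}$ and the relativistic Hermite polynomial $H_n^{N}$ satisfy \[ \mathcal{H}_{n}^{\mathcal{N}}(X)=\left(\frac{N}{\mathcal{N}}\right)^{\frac{n}{2}}H_{n}^{N}\!\left(X\sqrt{\frac{N}{\mathcal{N}}}\right). \]
   Context: For a real parameter $N\neq 0$ and an integer $n\ge0$, the relativistic Hermite polynomial of degree $n$ is defined by the Rodrigues formula \[ H_n^N(X)=(-1)^n\left(1+\frac{X^2}{N}\right)^{N+n}\frac{d^n}{dX^n}\left(1+\frac{X^2}{N}\right)^{-N}; \] the right-hand side is a polynomial in $X$ (e.g. $H_0^N=1$, $H_1^N=2X$, $H_2^N=2(-1+X^2(2+\frac1N))$). For a real parameter $\mathcal{N}>0$ and integer $n\ge0$, the Cari\~{n}ena polynomial of degree $n$ is defined by \[ \mathcal{H}_n^{\mathcal{N}}(X)=(-1)^n\left(1+\frac{X^2}{\mathcal{N}}\right)^{\mathcal{N}+\frac12}\frac{d^n}{dX^n}\left(1+\frac{X^2}{\mathcal{N}}\right)^{n-\mathcal{N}-\frac12},\qquad X\in\mathbb{R}. \] Both sides of the claimed identity are regarded as polynomials in $X$. *)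

From HB Require Import structures.
From mathcomp Require Import all_boot all_order all_algebra.
From mathcomp Require Import all_classical all_reals all_analysis.
From mathcomp Require Import complex.
Set Implicit Arguments. Unset Strict Implicit. Unset Printing Implicit Defensive.
Import Order.TTheory GRing.Theory Num.Theory.
Local Open Scope ring_scope.

Section Defs.
Variable R : realType.

Definition relHermite_fun (n : nat) (N : R) (X : R) : R :=
  (-1) ^+ n * (1 + X ^+ 2 / N) `^ (N + n%:R)
  * derive1n n (fun x : R => (1 + x ^+ 2 / N) `^ (- N)) X.

(* Defaults to 0 if no such polynomial. *)
Definition relHermite (n : nat) (N : R) : {poly R} :=
  xget 0 [set p : {poly R} | forall X : R, 0 < 1 + X ^+ 2 / N ->
                              p.[X] = relHermite_fun n N X].

Definition carinena_fun (n : nat) (NN : R) (X : R) : R :=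
  (-1) ^+ n * (1 + X ^+ 2 / NN) `^ (NN + 2^-1)
  * derive1n n (fun x : R => (1 + x ^+ 2 / NN) `^ (n%:R - NN - 2^-1)) X.

Definition carinena (n : nat) (NN : R) : {poly R} :=
  xget 0 [set p : {poly R} | forall X : R, p.[X] = carinena_fun n NN X].

End Defs.

(** For a polynomial [U] and a real [a], Leibniz's rule shows by
induction that on [{U > 0}] the [k]-th derivative of [U ^ a] is
[Q_k(U, a) * U ^ (a - k)], where [Q_0 = 1] and
[Q_(k+1) = Q_k' U + (a - k) Q_k U'].  Hence
[carinena n NN = (-1)^n Q_n(1 + X^2/NN, -N)] and
[relHermite n N = (-1)^n Q_n(1 + X^2/N, -N)], since [n - NN - 1/2 = -N].
Finally [1 + X^2/NN] is [1 + X^2/N] evaluated at [s X] with [s^2 = N/NN],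
and the recursion for [Q_k] shows that substituting [s X] for [X] in [U]
multiplies [Q_k] by [s^k] and substitutes [s X] in it. *)

From HB Require Import structures.
From mathcomp Require Import all_boot all_order all_algebra.
From mathcomp Require Import all_classical all_reals all_analysis.
From mathcomp Require Import complex.
From mathcomp Require Import ring.
Import Order.TTheory GRing.Theory Num.Theory numFieldNormedType.Exports.
Local Open Scope ring_scope.

Fixpoint rodrigues_poly (F : comNzRingType) (U : {poly F}) (a : F) (k : nat)
    : {poly F} :=
  match k with
  | 0 => 1
  | k'.+1 => let q := rodrigues_poly F U a k' in
             q^`() * U + (a - k'%:R) *: (q * U^`())
  end.
Arguments rodrigues_poly {F} U a k.

Lemma map_rodrigues_poly (F G : comNzRingType) (f : {rmorphism F -> G}) U a k :
  map_poly f (rodrigues_poly U a k) = rodrigues_poly (map_poly f U) (f a) k.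
Proof.
elim: k => [|k IHk] /=; first by rewrite rmorph1.
rewrite rmorphD rmorphM /= linearZ /= rmorphM /= !deriv_map IHk.
by rewrite rmorphB rmorph_nat -deriv_map IHk.
Qed.

Lemma rodrigues_poly_comp_scaleX (F : comNzRingType) (U : {poly F}) a s k :
  rodrigues_poly (U \Po (s *: 'X)) a k =
  s ^+ k *: (rodrigues_poly U a k \Po (s *: 'X)).
Proof.
elim: k => [|k IHk] /=; first by rewrite comp_polyC expr0 scale1r.
rewrite IHk !derivZ !deriv_comp derivZ derivX.
rewrite comp_polyD comp_polyM comp_polyZ comp_polyM.
rewrite -!scalerAl -!scalerAr !scalerA scalerDr !scalerA.
by rewrite -!mul_polyC !mulrA exprS !polyCM; ring.
Qed.

(* A polynomial is determined by its values on any neighbourhood, because it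
   then has infinitely many roots [x0 + e / (i + 2)]. *)
Lemma poly_eq_near (R : realType) (p q : {poly R}) (x0 : R) :
  (\forall x \near x0, p.[x] = q.[x]) -> p = q.
Proof.
move=> /nbhs_ballP [e /= e0 pq]; apply/eqP; rewrite -subr_eq0.
apply/negPn/negP => pq0.
pose xs := [seq x0 + e / (i.+2)%:R | i <- iota 0 (size (p - q))].
suff : (size xs < size (p - q)%R)%N by rewrite size_map size_iota ltnn.
apply: max_poly_roots => //.
  apply/allP => _ /mapP [i _ ->]; rewrite /root hornerD hornerN pq ?subrr //.
  rewrite /ball /= opprD addrA subrr sub0r normrN normrM normfV.
  rewrite (gtr0_norm e0) ger0_norm // ltr_pdivrMr ?ltr0Sn //.
  by rewrite ltr_pMr // ltr1n.
rewrite map_inj_uniq ?iota_uniq //.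
move=> i j /addrI /(mulfI (lt0r_neq0 e0)) /invr_inj /eqP.
by rewrite eqr_nat !eqSS => /eqP.
Qed.

Section RodriguesDerivative.
Variable R : realType.

Lemma derive1n_powR_horner (U : {poly R}) (a : R) k x : 0 < U.[x] ->
  derive1n k (fun y => U.[y] `^ a) x =
  (rodrigues_poly U a k).[x] * U.[x] `^ (a - k%:R).
Proof.
elim: k x => [|k IHk] x Ux; first by rewrite derive1n0 /= hornerE mul1r subr0.
pose powk := fun z : R => z `^ (a - k%:R).
rewrite derive1nS derive1E.
rewrite (@near_eq_derive _ _ _ _ (horner (rodrigues_poly U a k) * (powk \o horner U)));
  last by near=> y; rewrite IHk //; near: y; apply: cvgr_gt Ux; exact: continuous_horner.
have dU : derivable (horner U) x 1 by exact: derivable_horner.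
have dpow : derivable powk U.[x] 1 by apply: derivable_powR; rewrite in_itv /= Ux.
have dpowU : derivable (powk \o horner U) x 1.
  by apply/derivable1_diffP; apply: differentiable_comp; apply/derivable1_diffP.
rewrite deriveM ?derivable_horner // -!derive1E (derive1_comp dU dpow).
rewrite powR_derive1 ?in_itv /= ?Ux // !derive1E !derive_val /=.
have powk_split : powk U.[x] = U.[x] `^ (a - k%:R - 1) * U.[x].
  rewrite /powk -[X in _ = _ * X](powRr1 (ltW Ux)) -powRD ?subrK //.
  by rewrite (gt_eqF Ux) implybT.
rewrite powk_split -natr1 opprD addrA !hornerE /= /GRing.scale /=; ring.
Unshelve. all: end_near. Qed.

Lemma rodrigues_formulaE (U : {poly R}) (a : R) n x : 0 < U.[x] ->
  (-1) ^+ n * U.[x] `^ (n%:R - a) * derive1n n (fun y => U.[y] `^ a) x =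
  ((-1) ^+ n *: rodrigues_poly U a n).[x].
Proof.
move=> Ux; rewrite derive1n_powR_horner // hornerZ -opprB powRN.
have pow_neq0 : U.[x] `^ (a - n%:R) != 0 by rewrite gt_eqF // powR_gt0.
by field.
Qed.

Lemma horner_1addX2 (c x : R) : (1 + c^-1 *: 'X^2).[x] = 1 + x ^+ 2 / c.
Proof. by rewrite hornerD hornerC hornerZ hornerXn mulrC. Qed.

Lemma carinenaE (NN : R) n : 0 < NN ->
  carinena n NN =
  (-1) ^+ n *: rodrigues_poly (1 + NN^-1 *: 'X^2) (n%:R - NN - 2^-1) n.
Proof.
move=> NN0; set U := 1 + NN^-1 *: 'X^2; set a := n%:R - NN - 2^-1.
have Upos x : 0 < U.[x].
  by rewrite horner_1addX2 ltr_wpDr // divr_ge0 ?sqr_ge0 ?ltW.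
have UE x : carinena_fun n NN x = ((-1) ^+ n *: rodrigues_poly U a n).[x].
  rewrite /carinena_fun -/a.
  have -> : NN + 2^-1 = n%:R - a by rewrite /a; ring.
  have -> : (fun y : R => (1 + y ^+ 2 / NN) `^ a) = (fun y => U.[y] `^ a).
    by apply: funext => y; rewrite horner_1addX2.
  by rewrite -horner_1addX2 -/U rodrigues_formulaE ?Upos.
apply: xget_unique => [x|p pE]; first by rewrite UE.
by apply: (@poly_eq_near _ _ _ 0); apply: filterE => x; rewrite pE UE.
Qed.

Lemma relHermiteE (N : R) n : N != 0 ->
  relHermite n N = (-1) ^+ n *: rodrigues_poly (1 + N^-1 *: 'X^2) (- N) n.
Proof.
move=> N0; set U := 1 + N^-1 *: 'X^2.
have UE x : 0 < 1 + x ^+ 2 / N ->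
    relHermite_fun n N x = ((-1) ^+ n *: rodrigues_poly U (- N) n).[x].
  move=> Ux; rewrite /relHermite_fun.
  have -> : N + n%:R = n%:R - - N by ring.
  have -> : (fun y : R => (1 + y ^+ 2 / N) `^ (- N)) = (fun y => U.[y] `^ (- N)).
    by apply: funext => y; rewrite horner_1addX2.
  by rewrite -horner_1addX2 -/U rodrigues_formulaE ?horner_1addX2.
have U0 : 0 < U.[0] by rewrite horner_1addX2 expr0n mul0r addr0.
have Upos_near : \forall x \near 0, 0 < U.[x].
  exact: cvgr_gt _ (@continuous_horner R U 0) _ U0.
apply: xget_unique => [x /UE//|p pE].
apply: (@poly_eq_near _ _ _ 0); apply: filterS Upos_near => x.
by rewrite horner_1addX2 => Ux; rewrite pE ?UE.
Qed.

End RodriguesDerivative.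

Local Open Scope complex_scope.

Theorem theorem1 (R : realType) (NN : R) (n : nat) :
  0 < NN ->
  let N := NN + 2^-1 - n%:R in
  N != 0 ->
  let s : R[i] := sqrtc ((N / NN)%:C) in
  map_poly (fun x : R => x%:C) (carinena n NN) =
  s ^+ n *: ((map_poly (fun x : R => x%:C) (relHermite n N)) \Po (s *: 'X)).
Proof.
move=> NN0 N N0 s.
rewrite carinenaE // relHermiteE //.
have -> : n%:R - NN - 2^-1 = - N by rewrite /N; ring.
rewrite !map_polyZ /= !map_rodrigues_poly.
set f := fun x : R => x%:C.
have U_comp : map_poly f (1 + NN^-1 *: 'X^2) =
              map_poly f (1 + N^-1 *: 'X^2) \Po (s *: 'X).
  rewrite !rmorphD !rmorph1 /= !map_polyZ /= map_polyXn.
  rewrite comp_polyZ rmorphXn /= comp_polyX exprZn scalerA.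
  by rewrite sqr_sqrtc -rmorphM /= mulrA mulVf ?mul1r.
by rewrite U_comp rodrigues_poly_comp_scaleX comp_polyZ !scalerA mulrC.
Qed.
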